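(* Let $G$ and $H$ be two vertex-disjoint directed co-graphs. Then $\mathrm{tw}(\mathrm{un}(G\oslash H))>\mathrm{dtw}(G\oslash H)$.
   Context: Digraphs are finite, without loops or multiple arcs. Operations on vertex-disjoint digraphs $G_1,\ldots,G_k$: disjoint union $\oplus$ (union of vertex and arc sets); series composition $\otimes$ (disjoint union plus all arcs in both directions between vertices of different $G_i$); order composition $G_1\oslash\cdots\oslash G_k$ (disjoint union plus all arcs from vertices of $G_i$ to vertices of $G_j$ for $i<j$). Directed co-graphs: single-vertex digraphs, and closure under these three operations. $\mathrm{un}(G)$ is the underlying undirected graph of $G$ and $\mathrm{tw}$ is undirected tree-width. Directed tree-width: for $Z\subseteq V$, $S\subseteq V$ is $Z$-normal if no directed walk in $G-Z$ with first and last vertex in $S$ uses a vertex of $G-(Z\cup S)$. A directed tree-decomposition is $(T,\mathcal{X},\mathcal{W})$ with $T=(V_T,E_T)$ an out-tree (rooted, arcs directed away from root; $u\le v$ means a directed path of $\ge0$ arcs from $u$ to $v$), $\mathcal{X}=\{X_e:e\in E_T\}$, $\mathcal{W}=\{W_r:r\in V_T\}$ subsets of $V$, such that $\mathcal{W}$ partitions $V$ into nonempty sets and for each $(u,v)\in E_T$ the set $\bigcup\{W_r: v\le r\}$ is $X_{(u,v)}$-normal; width $\max_r|W_r\cup\bigcup_{e\sim r}X_e|-1$ ($e\sim r$: $r$ is an end of $e$); $\mathrm{dtw}(G)$ is the minimum width. *)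

From mathcomp Require Import all_boot.
Set Implicit Arguments. Unset Strict Implicit. Unset Printing Implicit Defensive.

(* A digraph is a finite type V of vertices with an arc relation E : rel V
   (E x y = there is an arc from x to y). *)

(** The k-ary operations are iterates of the
    binary ones. *)
Inductive cog (T : finType) (E : rel T) : {set T} -> Prop :=
| cog_single x : ~~ E x x -> cog E [set x]
| cog_union (A B : {set T}) : [disjoint A & B] -> cog E A -> cog E B ->
    (forall x y, x \in A -> y \in B -> ~~ E x y && ~~ E y x) -> cog E (A :|: B)
| cog_series (A B : {set T}) : [disjoint A & B] -> cog E A -> cog E B ->
    (forall x y, x \in A -> y \in B -> E x y && E y x) -> cog E (A :|: B)
| cog_order (A B : {set T}) : [disjoint A & B] -> cog E A -> cog E B ->
    (forall x y, x \in A -> y \in B -> E x y && ~~ E y x) -> cog E (A :|: B).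

Definition dcograph (T : finType) (E : rel T) : Prop := cog E [set: T].

Definition ocomp (T1 T2 : finType) (E1 : rel T1) (E2 : rel T2) : rel (T1 + T2) :=
  fun x y =>
    match x, y with
    | inl a, inl b => E1 a b
    | inr a, inr b => E2 a b
    | inl _, inr _ => true
    | inr _, inl _ => false
    end.

Definition un (V : finType) (E : rel V) : rel V := fun x y => E x y || E y x.

Definition is_tree (I : finType) (t : rel I) : Prop :=
  [/\ symmetric t, irreflexive t, 0 < #|I|,
      (forall i j, connect t i j) &
      #|[set p : I * I | t p.1 p.2]| = (#|I|).-1.*2].

Definition td_width (V I : finType) (B : I -> {set V}) : nat :=
  (\max_(i : I) #|B i|).-1.

Definition tree_decomp (V I : finType) (g : rel V) (t : rel I) (B : I -> {set V}) : Prop :=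
  [/\ is_tree t,
      (forall v, exists i, v \in B i),
      (forall u v, g u v -> exists i, (u \in B i) && (v \in B i)) &
      (forall v i j, v \in B i -> v \in B j ->
         connect [rel a b | [&& t a b, v \in B a & v \in B b]] i j)].

Definition has_td (V : finType) (g : rel V) (k : nat) : Prop :=
  exists (I : finType) (t : rel I) (B : I -> {set V}),
    tree_decomp g t B /\ td_width B = k.

Definition is_treewidth (V : finType) (g : rel V) (k : nat) : Prop :=
  has_td g k /\ forall k', has_td g k' -> k <= k'.

Definition is_outtree (I : finType) (a : rel I) (r : I) : Prop :=
  [/\ (forall i, ~~ a i r),
      (forall j, j != r -> exists! i, a i j) &
      (forall j, connect a r j)].

Definition normal (V : finType) (E : rel V) (Z S : {set V}) : Prop :=
  forall (x : V) (p : seq V),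
    path E x p -> all (fun y => y \notin Z) (x :: p) ->
    x \in S -> last x p \in S -> all (fun y => y \in Z :|: S) (x :: p).

Definition dtd_width (V I : finType) (a : rel I) (X : I -> I -> {set V})
    (W : I -> {set V}) : nat :=
  (\max_(r : I) #|W r :|: (\bigcup_(s | a r s) X r s)
                      :|: (\bigcup_(s | a s r) X s r)|).-1.

Definition dtree_decomp (V I : finType) (E : rel V) (a : rel I) (r : I)
    (X : I -> I -> {set V}) (W : I -> {set V}) : Prop :=
  [/\ is_outtree a r,
      (forall i, W i != set0),
      (forall i j, i != j -> [disjoint W i & W j]),
      (forall v, exists i, v \in W i) &
      (forall u v, a u v -> normal E (X u v) (\bigcup_(s | connect a v s) W s))].

Definition has_dtd (V : finType) (E : rel V) (k : nat) : Prop :=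
  exists (I : finType) (a : rel I) (r : I) (X : I -> I -> {set V}) (W : I -> {set V}),
    dtree_decomp E a r X W /\ dtd_width a X W = k.

Definition is_dtreewidth (V : finType) (E : rel V) (k : nat) : Prop :=
  has_dtd E k /\ forall k', has_dtd E k' -> k <= k'.

From mathcomp Require Import all_boot zify.
Set Implicit Arguments. Unset Strict Implicit. Unset Printing Implicit Defensive.

(* Only the nonemptiness of G and H matters.  Take a tree-decomposition of
   un(G ⊘ H) with bags of size at most tw + 1, and g0 in G, h0 in H.  Every
   vertex of H is adjacent to g0, so, rooting the tree at a bag containing g0
   and some vertex of H, the bag closest to the root containing a vertex u of H
   also contains g0.  Contracting the tree onto these top bags, with W(x) the
   vertices of H whose top bag is x and, on an arc into y, guard the vertices
   of B(y) ∩ H whose top bag is not below y, gives a directed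
   tree-decomposition of H whose bags at x lie in B(x) ∩ H, hence miss g0 and
   have at most tw vertices.  Symmetrically for G with apex h0.  As all arcs
   between G and H go from G to H, no walk leaves G and returns, so the
   decomposition of G can hang below the root of that of H with an empty
   guard, giving dtw <= tw - 1. *)

Lemma path_crossing (T : Type) (e : rel T) (P : pred T) x p :
  path e x p -> ~~ P x -> P (last x p) -> exists c c', [/\ e c c', ~~ P c & P c'].
Proof.
elim: p x => [|y p IH] x /=; first by move=> _ /negPf ->.
case/andP=> exy py Px Pl.
case Py: (P y); first by exists x, y; rewrite exy Px.
by apply: (IH y py); rewrite ?Py.
Qed.

Lemma path_invariant (T : Type) (e : rel T) (S P : pred T) x p :
  (forall u v, e u v -> S u -> P v -> S v) ->
  path e x p -> S x -> all P p -> all S (x :: p).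
Proof.
move=> step; elim: p x => [|y p IH] x /=; first by move=> _ ->.
case/andP=> exy py Sx /andP[Py Pp]; rewrite Sx.
exact: IH py (step x y exy Sx Py) Pp.
Qed.

Lemma connect_homo (T T' : finType) (e : rel T) (e' : rel T') (f : T -> T') :
  (forall x y, e x y -> e' (f x) (f y)) ->
  forall x y, connect e x y -> connect e' (f x) (f y).
Proof.
move=> hom x _ /connectP[p pp ->]; apply/connectP; exists (map f p); last by rewrite last_map.
by elim: p x pp => //= z p IH x /andP[/hom -> /IH].
Qed.

Definition dtd_bag (V I : finType) (a : rel I) (X : I -> I -> {set V}) (W : I -> {set V})
    (r : I) : {set V} :=
  W r :|: (\bigcup_(s | a r s) X r s) :|: (\bigcup_(s | a s r) X s r).

(* A directed tree-decomposition of the part of (V, E) induced by U, with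
   normality still measured by walks in the whole digraph. *)
Definition dtree_decomp_on (V I : finType) (E : rel V) (U : {set V}) (a : rel I) (r : I)
    (X : I -> I -> {set V}) (W : I -> {set V}) : Prop :=
  [/\ is_outtree a r,
      (forall i, W i != set0),
      (forall i j, i != j -> [disjoint W i & W j]),
      \bigcup_i W i = U &
      (forall u v, a u v -> normal E (X u v) (\bigcup_(s | connect a v s) W s))].

Definition has_dtd_on (V : finType) (E : rel V) (U : {set V}) (k : nat) : Prop :=
  exists (J : finType) (a : rel J) (r : J) (X : J -> J -> {set V}) (W : J -> {set V}),
    dtree_decomp_on E U a r X W /\ forall j, #|dtd_bag a X W j| <= k.

Section NormalSets.

Variables (V : finType) (E : rel V).

Lemma normal0_path (S : {set V}) x p :
  normal E set0 S -> path E x p -> x \in S -> last x p \in S -> all (mem S) (x :: p).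
Proof.
move=> S0 xp xS lS; have /(_ xp) := S0 x p.
have -> : all (fun y => y \notin set0) (x :: p) by apply/allP => y _; rewrite inE.
by move=> /(_ isT xS lS); apply: sub_all => y; rewrite set0U.
Qed.

Lemma normal0_out_closed (S : {set V}) :
  (forall x y, E x y -> x \in S -> y \in S) -> normal E set0 S.
Proof.
move=> out_closed x p xp _ xS _; rewrite set0U.
apply: (@path_invariant _ E (mem S) predT) xp xS (all_predT p) => u v.
by move=> /out_closed uv /uv.
Qed.

Lemma normal0_in_closed (S : {set V}) :
  (forall x y, E x y -> y \in S -> x \in S) -> normal E set0 S.
Proof.
move=> in_closed x p xp _ _; rewrite set0U.
elim: p x xp => [|y p IH] x /=; first by move=> _ ->.
case/andP=> /in_closed xy /IH yp /yp /= /andP[yS ->].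
by rewrite xy yS.
Qed.

End NormalSets.

Section RootedTree.

Variables (I : finType) (t : rel I) (root : I).
Hypothesis t_tree : is_tree t.

Definition root_path_of_size (i : I) (n : nat) : bool :=
  [exists p : n.-tuple I, path t root p && (last root p == i)].

Lemma root_path_of_sizeP i n :
  reflect (exists p, [/\ size p = n, path t root p & last root p = i])
          (root_path_of_size i n).
Proof.
apply: (iffP existsP) => [[p /andP[pp /eqP lp]]|[p [<- pp lp]]].
  by exists p; rewrite size_tuple.
by exists (in_tuple p); rewrite pp lp eqxx.
Qed.

Lemma exists_root_path i : exists n, root_path_of_size i n.
Proof.
have [_ _ _ t_conn _] := t_tree.
have /connectP[p pp lp] := t_conn root i.
by exists (size p); apply/root_path_of_sizeP; exists p.
Qed.

Definition depth (i : I) : nat := ex_minn (exists_root_path i).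

Lemma depthP i : root_path_of_size i (depth i).
Proof. by rewrite /depth; case: ex_minnP. Qed.

Lemma depth_min i n : root_path_of_size i n -> depth i <= n.
Proof. by rewrite /depth; case: ex_minnP => m _; apply. Qed.

Lemma depth_eq0 i : (depth i == 0) = (i == root).
Proof.
apply/eqP/eqP => [d0|->]; last first.
  by apply/eqP; rewrite -leqn0 depth_min //; apply/root_path_of_sizeP; exists [::].
have /root_path_of_sizeP[p [sp _ <-]] := depthP i.
by move: sp; rewrite d0; case: p.
Qed.

Lemma depth_root : depth root = 0.
Proof. by apply/eqP; rewrite depth_eq0. Qed.

Lemma depth_edge i j : t i j -> depth j <= (depth i).+1.
Proof.
move=> tij; have /root_path_of_sizeP[p [sp pp lp]] := depthP i.
apply: depth_min; apply/root_path_of_sizeP; exists (rcons p j).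
by rewrite size_rcons sp rcons_path pp lp tij last_rcons.
Qed.

Lemma shallower_neighbour j : j != root -> exists2 i, t i j & depth i = (depth j).-1.
Proof.
move=> nj; have /root_path_of_sizeP[p [sp pp lp]] := depthP j.
case/lastP: p sp pp lp => [|p i] /=; first by move=> _ _ je; rewrite je eqxx in nj.
rewrite size_rcons rcons_path last_rcons => sp /andP[pp ti] ij; subst i.
exists (last root p) => //.
have := depth_edge ti; have : depth (last root p) <= size p.
  by apply: depth_min; apply/root_path_of_sizeP; exists p.
lia.
Qed.

Definition parent (j : I) : I :=
  if j == root then root
  else odflt root [pick i | t i j && (depth i == (depth j).-1)].

Lemma parent_root : parent root = root.
Proof. by rewrite /parent eqxx. Qed.

Lemma parent_edge j : j != root -> t (parent j) j.
Proof.
move=> nj; rewrite /parent (negPf nj); case: pickP => [i /andP[] //|none].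
by have [i tij dij] := shallower_neighbour nj; move: (none i); rewrite tij dij eqxx.
Qed.

Lemma depth_parent j : depth (parent j) = (depth j).-1.
Proof.
rewrite /parent; case: eqP => [->|/eqP nj]; first by rewrite depth_root.
case: pickP => [i /andP[_ /eqP] //|none].
by have [i tij dij] := shallower_neighbour nj; move: (none i); rewrite tij dij eqxx.
Qed.

Lemma depth_gt0 j : (0 < depth j) = (j != root).
Proof. by rewrite lt0n depth_eq0. Qed.

(* Counting: the n - 1 parent arcs and their n - 1 reversals are pairwise
   distinct arcs of t (they change the depth in opposite directions), and t
   has only 2(n - 1) arcs, so every arc of t is of one of these two kinds. *)
Lemma tree_edge_parent x y :
  t x y -> (y != root /\ x = parent y) \/ (x != root /\ y = parent x).
Proof.
have [t_sym _ _ _ t_card] := t_tree.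
move=> txy; pose nonroot := [set j | j != root].
have card_nonroot : #|nonroot| = #|I|.-1.
  by rewrite -(cardsC1 root); apply: eq_card => j; rewrite !inE.
pose down := [set (parent j, j) | j in nonroot].
pose up := [set (j, parent j) | j in nonroot].
have card_down : #|down| = #|I|.-1 by rewrite card_imset // => a b [].
have card_up : #|up| = #|I|.-1 by rewrite card_imset // => a b [].
have down_up : down :&: up = set0.
  apply/setP=> [[u v]]; rewrite !inE; apply/negP=> /andP[/imsetP[j]].
  rewrite inE -depth_gt0 => j0 [-> ->] /imsetP[j']; rewrite inE -depth_gt0 => j'0 [e e'].
  have := depth_parent j; have := depth_parent j'; rewrite e -e'; lia.
have sub : down :|: up \subset [set p : I * I | t p.1 p.2].
  apply/subsetP=> [[u v]]; rewrite !inE.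
  by case/orP=> /imsetP[j]; rewrite inE => /parent_edge tj [-> ->]; rewrite // t_sym.
have /eqP all_arcs : down :|: up == [set p : I * I | t p.1 p.2].
  by rewrite eqEcard sub t_card cardsU down_up cards0 card_down card_up; lia.
have : (x, y) \in down :|: up by rewrite all_arcs inE.
rewrite inE => /orP[] /imsetP[j]; rewrite inE => nj [-> ->]; by [left | right].
Qed.

Lemma iter_parent_root n : iter n parent root = root.
Proof. by elim: n => //= n ->; rewrite parent_root. Qed.

Lemma depth_iter_parent n y : depth (iter n parent y) = depth y - n.
Proof. by elim: n => [|n IH] /=; rewrite ?subn0 // depth_parent IH; lia. Qed.

Lemma iter_parent_depth y : iter (depth y) parent y = root.
Proof. by apply/eqP; rewrite -depth_eq0 depth_iter_parent subnn. Qed.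

Definition ancestor (x y : I) : bool := x \in traject parent y (depth y).+1.

Lemma ancestorP x y : reflect (exists n, iter n parent y = x) (ancestor x y).
Proof.
apply: (iffP trajectP) => [[n _ ->]|[n <-]]; first by exists n.
case: (leqP n (depth y)) => hn; first by exists n.
exists (depth y) => //; rewrite -(subnK (ltnW hn)) iterD.
by rewrite iter_parent_depth iter_parent_root.
Qed.

Lemma ancestor_refl x : ancestor x x.
Proof. by apply/ancestorP; exists 0. Qed.

Lemma ancestor_parent y : ancestor (parent y) y.
Proof. by apply/ancestorP; exists 1. Qed.

Lemma root_ancestor y : ancestor root y.
Proof. by apply/ancestorP; exists (depth y); rewrite iter_parent_depth. Qed.

Lemma ancestor_trans y x z : ancestor x y -> ancestor y z -> ancestor x z.
Proof.
by move=> /ancestorP[m <-] /ancestorP[n <-]; apply/ancestorP; exists (m + n); rewrite iterD.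
Qed.

Lemma ancestor_depth x y : ancestor x y -> depth x <= depth y.
Proof. by move=> /ancestorP[n <-]; rewrite depth_iter_parent leq_subr. Qed.

Lemma ancestor_depth_eq x y : ancestor x y -> depth x = depth y -> x = y.
Proof.
move=> /ancestorP[[|n] <-] //; rewrite depth_iter_parent => e.
have /eqP : depth y = 0 by lia.
by rewrite depth_eq0 => /eqP ->; rewrite iter_parent_root.
Qed.

Lemma ancestor_antisym x y : ancestor x y -> ancestor y x -> x = y.
Proof.
move=> xy yx; apply: ancestor_depth_eq => //.
by apply/eqP; rewrite eqn_leq !ancestor_depth.
Qed.

Lemma ancestor_depth_lt x y : ancestor x y -> x != y -> depth x < depth y.
Proof.
move=> xy; apply: contraNT; rewrite -leqNgt => yx.
by rewrite (ancestor_depth_eq xy) //; apply/eqP; rewrite eqn_leq yx ancestor_depth.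
Qed.

Lemma ancestor_total x y z : ancestor x z -> ancestor y z -> ancestor x y || ancestor y x.
Proof.
move=> /ancestorP[m <-] /ancestorP[n <-]; case: (leqP m n) => mn; apply/orP.
  by right; apply/ancestorP; exists (n - m); rewrite -iterD subnK.
by left; apply/ancestorP; exists (m - n); rewrite -iterD subnK // ltnW.
Qed.

Lemma ancestor_parent_of x y : ancestor x y -> x != y -> ancestor x (parent y).
Proof.
move=> /ancestorP[[|n] <-]; first by rewrite eqxx.
by move=> _; apply/ancestorP; exists n; rewrite -iterSr.
Qed.

Lemma tree_edge_leaving_subtree x c c' :
  t c c' -> ancestor x c -> ~~ ancestor x c' -> [/\ c = x, x != root & c' = parent x].
Proof.
move=> tc xc xNc'; case: (tree_edge_parent tc) => [[_ cc']|[nc c'c]].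
  by rewrite (ancestor_trans xc) // cc' ancestor_parent in xNc'.
case: (eqVneq x c) => [xc_eq|xNc]; first by subst c.
by rewrite c'c ancestor_parent_of in xNc'.
Qed.

Section Bags.

Variables (V : finType) (B : I -> {set V}).
Hypotheses (bags_cover : forall v, exists i, v \in B i)
  (bags_connected : forall v i j, v \in B i -> v \in B j ->
     connect [rel a b | [&& t a b, v \in B a & v \in B b]] i j).

Definition top (v : V) : I :=
  [arg min_(i < xchoose (bags_cover v) | v \in B i) depth i].

Lemma top_spec v : v \in B (top v) /\ forall j, v \in B j -> depth (top v) <= depth j.
Proof. by rewrite /top; case: (arg_minnP depth (xchooseP (bags_cover v))). Qed.

Lemma mem_top v : v \in B (top v).
Proof. by case: (top_spec v). Qed.

Lemma depth_top v j : v \in B j -> depth (top v) <= depth j.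
Proof. by case: (top_spec v) => _; apply. Qed.

Lemma top_ancestor v j : v \in B j -> ancestor (top v) j.
Proof.
move=> vj; have /connectP[p vp pj] := bags_connected (mem_top v) vj.
case: (boolP (ancestor (top v) j)) => // topNj.
have top_top : ~~ ~~ ancestor (top v) (top v) by rewrite negbK ancestor_refl.
have last_out : ~~ ancestor (top v) (last (top v) p) by rewrite -pj.
have [c [c' [/and3P[tc _ vc'] /negPn top_c top_Nc']]] :=
  @path_crossing _ _ (fun c => ~~ ancestor (top v) c) _ _ vp top_top last_out.
have [_ topNroot c'_par] := tree_edge_leaving_subtree tc top_c top_Nc'.
move: (depth_top vc') topNroot; rewrite c'_par depth_parent -depth_gt0; lia.
Qed.

Lemma mem_bag_between v i j y :
  v \in B i -> v \in B j -> ancestor i y -> ancestor y j -> v \in B y.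
Proof.
move=> vi vj iy yj; case: (eqVneq i y) => [<- //|iNy].
have /connectP[p vp pj] := bags_connected vi vj.
have yNi : ~~ ancestor y i by apply: contra iNy => yi; rewrite (ancestor_antisym iy yi).
have last_in : ancestor y (last i p) by rewrite -pj.
have [c [c' [/and3P[tc _ vc'] yNc yc']]] :=
  @path_crossing _ _ (ancestor y) _ _ vp yNi last_in.
have [t_sym _ _ _ _] := t_tree.
by rewrite t_sym in tc; have [<- _ _] := tree_edge_leaving_subtree tc yc' yNc.
Qed.

Section ApexPart.

Variables (E : rel V) (U : {set V}) (apex u0 : V) (k : nat).
Hypotheses (U_closed : normal E set0 U) (apexNU : apex \notin U) (u0U : u0 \in U)
  (apex_root : apex \in B root) (u0_root : u0 \in B root)
  (edge_bag : forall u v, E u v -> exists i, (u \in B i) && (v \in B i))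
  (apex_bag : forall u, u \in U -> exists i, (apex \in B i) && (u \in B i))
  (bag_size : forall i, #|B i| <= k.+1).

Lemma apex_mem_top u : u \in U -> apex \in B (top u).
Proof.
move=> /apex_bag[j /andP[apex_j uj]].
exact: mem_bag_between apex_root apex_j (root_ancestor _) (top_ancestor uj).
Qed.

Definition tops : {set I} := [set top u | u in U].

Lemma root_in_tops : root \in tops.
Proof.
suff <- : top u0 = root by apply: imset_f.
by apply/eqP; rewrite -depth_eq0 -leqn0 -depth_root depth_top.
Qed.

Definition tparent (y : I) : I :=
  [arg max_(i > root | (i \in tops) && ancestor i y && (i != y)) depth i].

Lemma tparent_spec y : y != root ->
  [/\ tparent y \in tops, ancestor (tparent y) y, tparent y != y &
      forall z, z \in tops -> ancestor z y -> z != y -> depth z <= depth (tparent y)].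
Proof.
move=> yNroot; rewrite /tparent.
have root_ok : (root \in tops) && ancestor root y && (root != y).
  by rewrite root_in_tops root_ancestor eq_sym yNroot.
case: (@arg_maxnP _ root (fun i => (i \in tops) && ancestor i y && (i != y)) depth root_ok).
move=> i /andP[/andP[i_tops iy] iNy] max_i.
by split=> // z z_tops zy zNy; apply: max_i; rewrite z_tops zy zNy.
Qed.

Definition part_node := {i : I | i \in tops}.

Definition part_root : part_node := exist _ root root_in_tops.

Definition part_arc : rel part_node :=
  fun x y => (val y != root) && (tparent (val y) == val x).

Definition part_bag (x : part_node) : {set V} := [set u in U | top u == val x].

Definition below (y : I) : {set V} := [set u in U | ancestor y (top u)].

Definition part_guard (x y : part_node) : {set V} := (B (val y) :&: U) :\: below (val y).

Lemma connect_part_arc x y : connect part_arc x y = ancestor (val x) (val y).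
Proof.
apply/idP/idP.
  move=> /connectP[p + ->]; elim: p x => [|z p IH] x /=; first by rewrite ancestor_refl.
  case/andP=> /andP[zNroot /eqP <-] /IH; apply: ancestor_trans.
  by have [] := tparent_spec zNroot.
have [n] := ubnP (depth (val y)); elim: n y => // n IH y /ltnSE y_n xy.
case: (eqVneq x y) => [->|xNy]; first exact: connect0.
have xNy' : val x != val y by apply: contra xNy => /eqP/val_inj ->.
have yNroot : val y != root.
  by apply: contra xNy' => /eqP yroot; rewrite (ancestor_antisym xy) // yroot root_ancestor.
have [p_tops py pNy max_p] := tparent_spec yNroot.
pose p : part_node := exist _ (tparent (val y)) p_tops.
have xp : ancestor (val x) (val p).
  case/orP: (ancestor_total xy py) => // px.
  suff -> : val p = val x by apply: ancestor_refl.
  apply: (ancestor_depth_eq px); apply/eqP.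
  by rewrite eqn_leq ancestor_depth //=; exact: max_p (valP x) xy xNy'.
apply: connect_trans (IH p _ xp) (connect1 _); last by rewrite /part_arc yNroot /=.
exact: leq_trans (ancestor_depth_lt py pNy) y_n.
Qed.

Definition top_node u (uU : u \in U) : part_node := exist _ (top u) (imset_f top uU).

Lemma bigcup_part_bag y : \bigcup_(s | connect part_arc y s) part_bag s = below (val y).
Proof.
apply/setP=> u; rewrite inE; apply/bigcupP/andP => [[s ys]|[uU y_u]].
  by rewrite connect_part_arc in ys; rewrite inE => /andP[-> /eqP ->]; split.
by exists (top_node uU); rewrite ?connect_part_arc ?inE /= ?uU ?eqxx.
Qed.

Lemma below_step y u u' :
  u \in below y -> u' \in U -> E u u' -> u' \notin (B y :&: U) :\: below y ->
  u' \in below y.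
Proof.
rewrite !inE => /andP[uU y_u] u'U /edge_bag[j /andP[uj u'j]].
rewrite u'U /= => u'N; apply: contraNT u'N => yN_u'.
have yj := ancestor_trans y_u (top_ancestor uj).
case/orP: (ancestor_total yj (top_ancestor u'j)) => [y_u'|u'y]; first by rewrite y_u' in yN_u'.
by rewrite yN_u' (mem_bag_between (mem_top u') u'j u'y yj).
Qed.

Lemma normal_part x y : normal E (part_guard x y) (below (val y)).
Proof.
move=> z p zp avoid zS lS.
have below_U : forall w, w \in below (val y) -> w \in U by move=> w; rewrite inE => /andP[].
have /allP pU := normal0_path U_closed zp (below_U _ zS) (below_U _ lS).
have : all (mem (below (val y))) (z :: p).
  apply: (@path_invariant _ E _ (fun w => (w \in U) && (w \notin part_guard x y))) zp zS _.
    by move=> u u' uu' u_y /andP[u'U u'N]; apply: below_step uu' u'N.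
  apply/allP=> w wp; have wzp : w \in z :: p by rewrite inE wp orbT.
  have wU : w \in U := pU w wzp.
  by rewrite wU /=; move/allP: avoid; apply.
by apply: sub_all => w w_y; rewrite inE; apply/orP; right.
Qed.

Lemma part_guard_sub x y : part_arc x y -> part_guard x y \subset B (val x).
Proof.
case/andP=> yNroot /eqP y_x; apply/subsetP => w.
rewrite inE => /andP[wN /setIP[wy wU]]; rewrite inE wU /= in wN.
have [_ xy _ max_x] := tparent_spec yNroot; rewrite y_x in xy max_x.
have wtop_y := top_ancestor wy.
have wtop_x : ancestor (top w) (val x).
  case/orP: (ancestor_total wtop_y xy) => // x_wtop.
  suff -> : top w = val x by apply: ancestor_refl.
  apply/esym/(ancestor_depth_eq x_wtop)/eqP; rewrite eqn_leq ancestor_depth //=.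
  apply: max_x wtop_y _; first exact: imset_f.
  by apply: contraNneq wN => ->; apply: ancestor_refl.
exact: mem_bag_between (mem_top w) wy wtop_x xy.
Qed.

Lemma dtd_bag_part_sub x : dtd_bag part_arc part_guard part_bag x \subset B (val x) :&: U.
Proof.
rewrite !subUset -andbA; apply/and3P; split.
- by apply/subsetP => u; rewrite !inE => /andP[-> /eqP <-]; rewrite mem_top.
- apply/bigcupsP => y xy; rewrite subsetI part_guard_sub //.
  by apply/subsetP => u; rewrite !inE => /and3P[].
- by apply/bigcupsP => y _; apply: subsetDl.
Qed.

Lemma card_dtd_bag_part x : #|dtd_bag part_arc part_guard part_bag x| <= k.
Proof.
have apex_only : B (val x) :&: U \proper B (val x).
  apply/properP; split; first exact: subsetIl.
  have /imsetP[u uU ->] := valP x.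
  by exists apex; rewrite ?inE ?apex_mem_top ?(negPf apexNU) ?andbF.
have := subset_leq_card (dtd_bag_part_sub x).
have := proper_card apex_only; have := bag_size (val x); lia.
Qed.

Lemma part_outtree : is_outtree part_arc part_root.
Proof.
split.
- by move=> i; rewrite /part_arc /= eqxx.
- move=> y yNroot.
  have yNroot' : val y != root by apply: contra yNroot => /eqP yr; apply/eqP/val_inj.
  have [x_tops _ _ _] := tparent_spec yNroot'.
  exists (exist _ (tparent (val y)) x_tops); split; first by rewrite /part_arc yNroot' eqxx.
  by move=> x' /andP[_ /eqP x'_y]; apply: val_inj; rewrite /= x'_y.
- by move=> y; rewrite connect_part_arc root_ancestor.
Qed.

Lemma part_dtd : dtree_decomp_on E U part_arc part_root part_guard part_bag.
Proof.
split.
- exact: part_outtree.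
- move=> x; apply/set0Pn; have /imsetP[u uU x_u] := valP x.
  by exists u; rewrite inE uU x_u eqxx.
- move=> x y xNy; rewrite -setI_eq0; apply/eqP/setP => u; rewrite !inE; apply/negP.
  move=> /andP[/andP[_ /eqP u_x] /andP[_ /eqP u_y]].
  by rewrite (val_inj (etrans (esym u_x) u_y)) eqxx in xNy.
- apply/setP=> u; apply/bigcupP/idP => [[x _]|uU]; first by rewrite inE => /andP[].
  by exists (top_node uU); rewrite // inE uU eqxx.
- by move=> x y _; rewrite bigcup_part_bag; apply: normal_part.
Qed.

End ApexPart.

End Bags.

End RootedTree.

Lemma apex_part_dtd (V I : finType) (E : rel V) (t : rel I) (B : I -> {set V})
    (U : {set V}) (apex u0 : V) (k : nat) :
  tree_decomp (un E) t B -> (forall i, #|B i| <= k.+1) ->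
  normal E set0 U -> apex \notin U -> u0 \in U -> (forall u, u \in U -> un E apex u) ->
  has_dtd_on E U k.
Proof.
case=> t_tree cover edge_bag conn bag_size U_closed apexNU u0U apex_adj.
have apex_bag u : u \in U -> exists i, (apex \in B i) && (u \in B i).
  by move=> /apex_adj; apply: edge_bag.
have [root /andP[apex_root u0_root]] := apex_bag _ u0U.
have edgeE u v : E u v -> exists i, (u \in B i) && (v \in B i).
  by move=> uv; apply: edge_bag; rewrite /un uv.
do 5 eexists; split.
- exact: (part_dtd t_tree cover conn U_closed u0U u0_root edgeE).
- exact: (card_dtd_bag_part conn apexNU u0U apex_root u0_root apex_bag bag_size).
Qed.

Section Stack.

Variables (V : finType) (E : rel V) (UA UB : {set V}).
Variables (IA : finType) (aA : rel IA) (rA : IA).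
Variables (XA : IA -> IA -> {set V}) (WA : IA -> {set V}).
Variables (IB : finType) (aB : rel IB) (rB : IB).
Variables (XB : IB -> IB -> {set V}) (WB : IB -> {set V}).

Definition stack_arc : rel (IA + IB) := fun x y =>
  match x, y with
  | inl x, inl y => aA x y
  | inr x, inr y => aB x y
  | inl x, inr y => (x == rA) && (y == rB)
  | inr _, inl _ => false
  end.

Definition stack_guard (x y : IA + IB) : {set V} :=
  match x, y with
  | inl x, inl y => XA x y
  | inr x, inr y => XB x y
  | _, _ => set0
  end.

Definition stack_bag (x : IA + IB) : {set V} :=
  match x with inl x => WA x | inr x => WB x end.

Hypotheses (dA : dtree_decomp_on E UA aA rA XA WA)
  (dB : dtree_decomp_on E UB aB rB XB WB)
  (UA_UB : [disjoint UA & UB]) (UA_UB_cover : UA :|: UB = setT)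
  (UB_closed : normal E set0 UB).

Lemma connect_stack_inr x s :
  connect stack_arc (inr x) s = if s is inr y then connect aB x y else false.
Proof.
apply/idP/idP => [/connectP[p + ->]|]; last by case: s => // y; apply: connect_homo.
elim: p x => [|[z|z] p IH] x //=.
case/andP=> xz /IH; case: (last _ p) => // y; exact/connect_trans/connect1.
Qed.

Lemma connect_stack_inl x s : x != rA ->
  connect stack_arc (inl x) s = if s is inl y then connect aA x y else false.
Proof.
have [[no_arc_rA _ _] _ _ _ _] := dA.
move=> xNr; apply/idP/idP => [/connectP[p + ->]|]; last first.
  by case: s => // y; apply: connect_homo.
elim: p x xNr => [|[z|z] p IH] x xNr //=; last by rewrite (negPf xNr).
case/andP=> xz zp; have zNr : z != rA by apply: contraNneq (no_arc_rA x) => <-.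
by move: (IH z zNr zp); case: (last _ p) => // y; apply/connect_trans/connect1.
Qed.

Lemma bigcup_stack_inl x : x != rA ->
  \bigcup_(s | connect stack_arc (inl x) s) stack_bag s = \bigcup_(s | connect aA x s) WA s.
Proof.
move=> xNr; apply/setP=> u; apply/bigcupP/bigcupP => [[[s|s]]|[s xs us]].
- by rewrite connect_stack_inl //= => xs us; exists s.
- by rewrite connect_stack_inl.
- by exists (inl s); rewrite ?connect_stack_inl.
Qed.

Lemma bigcup_stack_inr x :
  \bigcup_(s | connect stack_arc (inr x) s) stack_bag s = \bigcup_(s | connect aB x s) WB s.
Proof.
apply/setP=> u; apply/bigcupP/bigcupP => [[[s|s]]|[s xs us]].
- by rewrite connect_stack_inr.
- by rewrite connect_stack_inr /= => xs us; exists s.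
- by exists (inr s); rewrite ?connect_stack_inr.
Qed.

Lemma stack_outtree : is_outtree stack_arc (inl rA).
Proof.
have [[no_arc_rA parentA reachA] _ _ _ _] := dA.
have [[no_arc_rB parentB reachB] _ _ _ _] := dB.
split.
- by case=> i //=; apply: no_arc_rA.
- case=> [y|y] yNr.
    have [x [xy x_uniq]] : exists! x, aA x y by apply: parentA; apply: contraNneq yNr => ->.
    by exists (inl x); split=> // [[x'|x']] //= /x_uniq ->.
  case: (eqVneq y rB) => [->|yNrB].
    exists (inl rA); split; first by rewrite /= !eqxx.
    by case=> [x'|x'] /=; [case/andP=> /eqP -> | rewrite (negPf (no_arc_rB x'))].
  have [x [xy x_uniq]] := parentB y yNrB.
  by exists (inr x); split=> // [[x'|x']] /=; [rewrite (negPf yNrB) andbF | move/x_uniq ->].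
- case=> y; first exact: connect_homo (reachA y).
  apply: connect_trans (connect1 (_ : stack_arc (inl rA) (inr rB))) _; first by rewrite /= !eqxx.
  by rewrite connect_stack_inr.
Qed.

Lemma stack_dtd : dtree_decomp E stack_arc (inl rA) stack_guard stack_bag.
Proof.
have [[no_arc_rA _ _] neA disjA coverA normalA] := dA.
have [_ neB disjB coverB normalB] := dB.
have subA i : WA i \subset UA by rewrite -coverA; apply: bigcup_sup.
have subB i : WB i \subset UB by rewrite -coverB; apply: bigcup_sup.
split.
- exact: stack_outtree.
- by case.
- case=> [i|i] [j|j] /= ij.
  + by apply: disjA; apply: contraNneq ij => ->.
  + exact: disjointWl (subA i) (disjointWr (subB j) UA_UB).
  + by rewrite disjoint_sym; apply: disjointWl (subA j) (disjointWr (subB i) UA_UB).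
  + by apply: disjB; apply: contraNneq ij => ->.
- move=> v; have : v \in UA :|: UB by rewrite UA_UB_cover inE.
  rewrite -{1}coverA -coverB inE => /orP[] /bigcupP[i _ vi].
    by exists (inl i).
  by exists (inr i).
- case=> [x|x] [y|y] //= xy.
  + rewrite bigcup_stack_inl; first exact: normalA.
    by apply: contraNneq (no_arc_rA x) => <-.
  + case/andP: xy => _ /eqP ->; rewrite bigcup_stack_inr.
    have [[_ _ reachB] _ _ _ _] := dB.
    by rewrite (eq_bigl _ _ reachB) coverB.
  + by rewrite bigcup_stack_inr; apply: normalB.
Qed.

Lemma dtd_bag_stack x :
  dtd_bag stack_arc stack_guard stack_bag x =
  match x with inl y => dtd_bag aA XA WA y | inr y => dtd_bag aB XB WB y end.
Proof. by case: x => y; rewrite /dtd_bag !big_sumType /= !big1_eq ?setU0 ?set0U. Qed.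

End Stack.

Lemma td_bag_size (V I : finType) (B : I -> {set V}) i : #|B i| <= (td_width B).+1.
Proof. exact: leq_trans (leq_bigmax (F := fun j => #|B j|) i) (leqSpred _). Qed.

Lemma td_width_gt0 (V I : finType) (B : I -> {set V}) i u v :
  u != v -> u \in B i -> v \in B i -> 0 < td_width B.
Proof.
move=> uNv ui vi; have uv_i : [set u; v] \subset B i.
  by apply/subsetP => w; rewrite !inE => /orP[] /eqP ->.
by have := subset_leq_card uv_i; rewrite cards2 uNv; have := td_bag_size B i; lia.
Qed.

Lemma dtd_width_le (V I : finType) (a : rel I) (X : I -> I -> {set V}) (W : I -> {set V}) k :
  (forall r, #|dtd_bag a X W r| <= k) -> dtd_width a X W <= k.-1.
Proof.
move=> bag_le; rewrite /dtd_width -!subn1 leq_sub2r //.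
by apply/bigmax_leqP => r _; apply: bag_le.
Qed.

Lemma has_dtd_lt_split (V : finType) (E : rel V) (L : {set V}) (l0 r0 : V) (k : nat) :
  (forall x y, E x y -> y \in L -> x \in L) -> l0 \in L -> r0 \notin L ->
  (forall u, u \notin L -> un E l0 u) -> (forall u, u \in L -> un E r0 u) ->
  has_td (un E) k -> exists2 k', has_dtd E k' & k' < k.
Proof.
move=> in_closed l0L r0NL l0_adj r0_adj [I [t [B [td <-]]]].
have bag_size := td_bag_size B.
have L_closed : normal E set0 L := normal0_in_closed in_closed.
have R_closed : normal E set0 (~: L).
  by apply: normal0_out_closed => x y /in_closed; rewrite !inE; apply: contra.
have [JR [aR [rR [XR [WR [dR sizeR]]]]]] : has_dtd_on E (~: L) (td_width B).
  apply: (apex_part_dtd (apex := l0) (u0 := r0) td bag_size R_closed); rewrite ?inE ?negbK //.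
  by move=> u; rewrite inE; apply: l0_adj.
have [JL [aL [rL [XL [WL [dL sizeL]]]]]] := apex_part_dtd td bag_size L_closed r0NL l0L r0_adj.
have width_pos : 0 < td_width B.
  have [_ _ edge_bag _] := td; have [i /andP[l0i r0i]] := edge_bag _ _ (l0_adj _ r0NL).
  by apply: td_width_gt0 l0i r0i; apply: contraNneq r0NL => <-.
exists (dtd_width (stack_arc aR rR aL rL) (stack_guard XR XL) (stack_bag WR WL)).
  exists (JR + JL)%type, (stack_arc aR rR aL rL), (inl rR).
  exists (stack_guard XR XL), (stack_bag WR WL); split => //.
  apply: stack_dtd dR dL _ _ L_closed; first by rewrite disjoints_subset.
  by rewrite setUC setUCr.
apply: leq_ltn_trans (dtd_width_le (k := td_width B) _) _; last by rewrite ltn_predL.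
by case=> j; rewrite dtd_bag_stack.
Qed.

Lemma cog_neq0 (T : finType) (E : rel T) (A : {set T}) : cog E A -> A != set0.
Proof.
elim=> [x _|A' B' _ _ nA _ _ _|A' B' _ _ nA _ _ _|A' B' _ _ nA _ _ _];
  first by apply/set0Pn; exists x; rewrite inE.
all: by case/set0Pn: nA => x xA; apply/set0Pn; exists x; rewrite inE xA.
Qed.

Theorem lemma4p11 (T1 T2 : finType) (E1 : rel T1) (E2 : rel T2) :
  dcograph E1 -> dcograph E2 ->
  forall tw dtw : nat,
    is_treewidth (un (ocomp E1 E2)) tw ->
    is_dtreewidth (ocomp E1 E2) dtw ->
    dtw < tw.
Proof.
move=> cogG cogH tw dtw [td_tw _] [_ dtw_min].
have /set0Pn[g0 _] := cog_neq0 cogG.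
have /set0Pn[h0 _] := cog_neq0 cogH.
have [k dk lt_k] : exists2 k, has_dtd (ocomp E1 E2) k & k < tw.
  apply: (@has_dtd_lt_split _ _ [set x | is_inl x] (inl g0) (inr h0)) td_tw; rewrite ?inE //.
  - by move=> [x|x] [y|y]; rewrite !inE.
  - by move=> [x|x]; rewrite inE.
  - by move=> [x|x]; rewrite inE //= orbT.
exact: leq_ltn_trans (dtw_min _ dk) lt_k.
Qed.
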